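(* The zero-error capacity of the $(w,d)$ sliding-window erasure channel with input alphabet of size $q$ satisfies $C_0\ge 1-\frac{1}{w}\log_q V^w_d(q)$.
   Context: $V^n_r(q)=\sum_{i=0}^{r}\binom{n}{i}(q-1)^i$. Integers $w\ge1$, $0\le d\le w$, $q\ge2$, $|\mathcal{X}|=q$. The $(w,d)$ sliding-window erasure channel: a noise word $v(0:n-1)\in\{0,1\}^n$ is admissible if for some initial pattern $v(-w:-1)\in\{0,1\}^w$ every $w$ consecutive entries of $(v(-w),\dots,v(n-1))$ contain at most $d$ ones; output $y(t)=x(t)$ if $v(t)=0$ and $y(t)=*$ (a symbol not in $\mathcal{X}$) if $v(t)=1$. A zero-error code of length $n$ is a set $\mathcal{F}\subseteq\mathcal{X}^n$ such that no output word can be produced by two distinct codewords under admissible noise; $C_0=\sup_n\sup_{\mathcal{F}}\log_q|\mathcal{F}|/n$. *)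

From Stdlib Require Import Reals List Arith.
Import ListNotations.
Open Scope R_scope.

Definition logq (q : nat) (x : R) : R := ln x / ln (INR q).

Definition Vball (n r q : nat) : R :=
  sum_f_R0 (fun i => Binomial.C n i * (INR q - 1) ^ i) r.

Definition is_word (q n : nat) (x : list nat) : Prop :=
  length x = n /\ Forall (fun a => (a < q)%nat) x.

Definition ones (v : list bool) : nat := count_occ Bool.bool_dec v true.

Definition windows_ok (w d : nat) (s : list bool) : Prop :=
  forall i, (i + w <= length s)%nat -> (ones (firstn w (skipn i s)) <= d)%nat.

(* admissible noise word v(0:n-1): some initial pattern v(-w:-1) of length w
   such that (v(-w),...,v(n-1)) satisfies the window constraint *)
Definition admissible (w d n : nat) (v : list bool) : Prop :=
  length v = n /\
  exists init : list bool, length init = w /\ windows_ok w d (init ++ v).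

(* channel output: None is the erasure symbol * *)
Definition output (x : list nat) (v : list bool) : list (option nat) :=
  map (fun p : nat * bool => if snd p then None else Some (fst p)) (combine x v).

(* F is a code of length n over the alphabet of size q (a finite set of words,
   represented as a duplicate-free list) *)
Definition is_code (q n : nat) (F : list (list nat)) : Prop :=
  NoDup F /\ Forall (is_word q n) F.

Definition zero_error (w d n : nat) (F : list (list nat)) : Prop :=
  forall x1 x2 v1 v2, In x1 F -> In x2 F ->
    admissible w d n v1 -> admissible w d n v2 ->
    output x1 v1 = output x2 v2 -> x1 = x2.

From Stdlib Require Import Reals List Arith Lia Lra.
Import ListNotations.
Open Scope R_scope.

(* Gilbert-Varshamov on a single block of length [w]: the initial pattern
   precedes the block, so the window covering the whole block shows that
   admissible noise erases at most [d] of its [w] symbols.  Codewords at pairwise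
   Hamming distance greater than [d] therefore cannot be confused, and greedily
   picking words while discarding their radius-[d] balls yields at least
   [q^w / V^w_d(q)] of them, i.e. rate at least [1 - log_q V^w_d(q) / w]. *)

Fixpoint hamming (x y : list nat) : nat :=
  match x, y with
  | a :: x', b :: y' => ((if Nat.eqb a b then 0 else 1) + hamming x' y')%nat
  | _, _ => 0%nat
  end.

Lemma hamming_refl x : hamming x x = 0%nat.
Proof. induction x as [|a x IH]; simpl; [|rewrite Nat.eqb_refl]; auto. Qed.

Lemma hamming_sym x y : hamming x y = hamming y x.
Proof.
  revert y; induction x as [|a x IH]; intros [|b y]; simpl; auto.
  now rewrite IH, Nat.eqb_sym.
Qed.

Lemma hamming_cons a b x y :
  hamming (a :: x) (b :: y) = ((if Nat.eqb a b then 0 else 1) + hamming x y)%nat.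
Proof. reflexivity. Qed.

Lemma ones_cons b v : ones (b :: v) = ((if b then 1 else 0) + ones v)%nat.
Proof. now destruct b. Qed.

(* A symbol on which two codewords differ must be erased in both outputs. *)
Lemma hamming_le_ones_of_output_eq x1 x2 v1 v2 :
  length x1 = length v1 -> length x2 = length v2 -> length x1 = length x2 ->
  output x1 v1 = output x2 v2 -> (hamming x1 x2 <= ones v1)%nat.
Proof.
  revert x2 v1 v2; induction x1 as [|a x1 IH]; intros x2 v1 v2 H1 H2 H12 Ho.
  - simpl; lia.
  - destruct x2 as [|b x2], v1 as [|e1 v1], v2 as [|e2 v2];
      simpl length in *; try lia.
    unfold output in Ho; simpl in Ho; injection Ho as Hhead Htail.
    specialize (IH x2 v1 v2 ltac:(lia) ltac:(lia) ltac:(lia) Htail).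
    rewrite hamming_cons, ones_cons.
    destruct e1, e2; try discriminate.
    + destruct (Nat.eqb a b); lia.
    + injection Hhead as ->; rewrite Nat.eqb_refl; lia.
Qed.

Lemma admissible_block_ones w d v : admissible w d w v -> (ones v <= d)%nat.
Proof.
  intros [Hv [init [Hinit Hwin]]].
  specialize (Hwin w ltac:(rewrite length_app; lia)).
  rewrite skipn_app, skipn_all2, Hinit, Nat.sub_diag in Hwin by lia.
  now rewrite firstn_all2 in Hwin by (simpl; lia).
Qed.

Lemma zero_error_of_hamming_gt w d F :
  Forall (fun x => length x = w) F ->
  (forall x y, In x F -> In y F -> x <> y -> (d < hamming x y)%nat) ->
  zero_error w d w F.
Proof.
  intros Hlen Hdist x1 x2 v1 v2 H1 H2 Hv1 Hv2 Ho.
  destruct (list_eq_dec Nat.eq_dec x1 x2) as [|Hne]; [assumption|exfalso].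
  rewrite Forall_forall in Hlen.
  pose proof (Hlen _ H1); pose proof (Hlen _ H2).
  pose proof (proj1 Hv1); pose proof (proj1 Hv2).
  pose proof (hamming_le_ones_of_output_eq x1 x2 v1 v2
                ltac:(lia) ltac:(lia) ltac:(lia) Ho).
  pose proof (admissible_block_ones _ _ _ Hv1).
  pose proof (Hdist _ _ H1 H2 Hne).
  lia.
Qed.

Section Greedy.

Variable A : Type.
Variable close : A -> A -> bool.
Hypothesis close_refl : forall x, close x x = true.
Hypothesis close_sym : forall x y, close x y = close y x.

Lemma length_filter_filter_le (p r : A -> bool) l :
  (length (filter p (filter r l)) <= length (filter p l))%nat.
Proof.
  induction l as [|a l IH]; simpl; [auto|].
  destruct (r a); simpl; destruct (p a); simpl; lia.
Qed.

Lemma greedy_far_subset (B : nat) : forall L : list A,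
  (forall x, In x L -> (length (filter (close x) L) <= B)%nat) ->
  exists C, NoDup C /\ incl C L /\
    (forall x y, In x C -> In y C -> x <> y -> close x y = false) /\
    (length L <= length C * B)%nat.
Proof.
  intros L; remember (length L) as n eqn:Hn; revert L Hn.
  induction n as [n IH] using lt_wf_ind; intros [|x L0] Hn HB.
  { exists []; repeat split; [apply NoDup_nil | intros ? [] | intros ? ? [] | simpl in *; lia]. }
  set (far := fun y => negb (close x y)).
  set (L' := filter far L0).
  assert (Hsplit : length L0 = (length L' + length (filter (close x) L0))%nat).
  { pose proof (filter_length (close x) L0); unfold L', far; lia. }
  assert (Hball : (S (length (filter (close x) L0)) <= B)%nat).
  { specialize (HB x (or_introl eq_refl)); simpl in HB.
    now rewrite close_refl in HB. }
  assert (HB' : forall z, In z L' -> (length (filter (close z) L') <= B)%nat).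
  { intros z Hz; unfold L' in Hz |- *; apply filter_In in Hz as [Hz _].
    eapply Nat.le_trans; [apply length_filter_filter_le|].
    eapply Nat.le_trans; [|apply (HB z (or_intror Hz))]; simpl.
    destruct (close z x); simpl; lia. }
  destruct (IH (length L') ltac:(simpl in Hn; lia) L' eq_refl HB')
    as [C [HnodupC [HinclC [HfarC HlenC]]]].
  assert (Hfar : forall z, In z C -> close x z = false).
  { intros z Hz; apply HinclC in Hz; unfold L', far in Hz.
    apply filter_In in Hz as [_ Hz]; now destruct (close x z). }
  exists (x :: C); repeat split.
  - constructor; [|assumption].
    intros Hx; specialize (Hfar x Hx); congruence.
  - intros z [<-|Hz]; [now left|right].
    exact (incl_filter _ _ _ (HinclC _ Hz)).
  - intros a b [<-|Ha] [<-|Hb] Hne; auto; [congruence|].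
    rewrite close_sym; auto.
  - simpl in *; lia.
Qed.

End Greedy.

Lemma list_sum_map_const {X : Type} (f : X -> nat) (B : nat) l :
  (forall b, In b l -> f b = B) -> list_sum (map f l) = (length l * B)%nat.
Proof.
  induction l as [|b l IH]; intros Hf; simpl; auto.
  rewrite Hf by now left.
  rewrite IH by (intros c Hc; apply Hf; now right); lia.
Qed.

Lemma list_sum_map_single {X : Type} (f : X -> nat) (a : X) (A B : nat) l :
  NoDup l -> In a l -> f a = A -> (forall b, In b l -> b <> a -> f b = B) ->
  list_sum (map f l) = (A + (length l - 1) * B)%nat.
Proof.
  induction l as [|b l IH]; intros Hnodup Ha HfA HfB; [destruct Ha|].
  apply NoDup_cons_iff in Hnodup as [Hb Hl]; simpl.
  destruct Ha as [<-|Ha].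
  - rewrite HfA, (list_sum_map_const f B); [lia|].
    intros c Hc; apply HfB; [now right|congruence].
  - rewrite HfB, IH; auto.
    + destruct l; [destruct Ha|simpl; lia].
    + intros c Hc; apply HfB; now right.
    + now left.
    + intros ->; contradiction.
Qed.

Lemma length_filter_flat_map {X Y : Type} (p : Y -> bool) (g : X -> list Y) l :
  length (filter p (flat_map g l)) = list_sum (map (fun b => length (filter p (g b))) l).
Proof.
  induction l as [|b l IH]; simpl; auto.
  now rewrite filter_app, length_app, IH.
Qed.

Lemma length_filter_map {X Y : Type} (p : Y -> bool) (f : X -> Y) l :
  length (filter p (map f l)) = length (filter (fun y => p (f y)) l).
Proof. induction l as [|b l IH]; simpl; auto. destruct (p (f b)); simpl; auto. Qed.

Fixpoint words (q n : nat) : list (list nat) :=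
  match n with
  | O => [[]]
  | S n' => flat_map (fun b => map (cons b) (words q n')) (seq 0 q)
  end.

Lemma length_words q n : length (words q n) = (q ^ n)%nat.
Proof.
  induction n as [|n IH]; simpl; auto.
  rewrite length_flat_map, (list_sum_map_const _ (q ^ n)), length_seq; auto.
  intros b _; now rewrite length_map.
Qed.

Lemma is_word_of_In_words q n x : In x (words q n) -> is_word q n x.
Proof.
  revert x; induction n as [|n IH]; simpl; intros x Hx.
  - destruct Hx as [<-|[]]; split; auto.
  - apply in_flat_map in Hx as [b [Hb Hx]]; apply in_map_iff in Hx as [y [<- Hy]].
    apply in_seq in Hb; destruct (IH y Hy) as [Hlen Hsym].
    split; simpl; [auto|constructor; [lia|assumption]].
Qed.

(* The number of words of length [n] within Hamming distance [r] of a fixed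
   one; the recursion splits on whether the first symbol agrees. *)
Fixpoint ball_size (q n r : nat) : nat :=
  match n with
  | O => 1
  | S n' => ball_size q n' r
            + (q - 1) * match r with O => 0 | S r' => ball_size q n' r' end
  end.

Lemma length_hamming_ball q n x r : is_word q n x ->
  length (filter (fun y => hamming x y <=? r) (words q n)) = ball_size q n r.
Proof.
  revert x r; induction n as [|n IH]; intros x r [Hlen Hsym].
  - now destruct x.
  - destruct x as [|a x]; [discriminate|].
    inversion Hsym as [|? ? Ha Hx]; subst.
    assert (Hw : is_word q n x) by (split; auto).
    simpl words; rewrite length_filter_flat_map.
    erewrite list_sum_map_single with (a := a);
      [now rewrite length_seq | apply seq_NoDup | apply in_seq; lia | |].
    + rewrite length_filter_map, (filter_ext _ (fun y => hamming x y <=? r)).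
      * apply IH, Hw.
      * intros y; now rewrite hamming_cons, Nat.eqb_refl.
    + intros b _ Hba; rewrite length_filter_map.
      assert (Hab : Nat.eqb a b = false) by (apply Nat.eqb_neq; congruence).
      destruct r as [|r'].
      * rewrite (filter_ext _ (fun _ => false)), filter_false; [reflexivity|].
        intros y; now rewrite hamming_cons, Hab.
      * rewrite (filter_ext _ (fun y => hamming x y <=? r')); [apply IH, Hw|].
        intros y; now rewrite hamming_cons, Hab.
Qed.

Fixpoint binom (n k : nat) : nat :=
  match n, k with
  | _, O => 1
  | O, S _ => 0
  | S n', S k' => binom n' k' + binom n' (S k')
  end.

Lemma binom_n_0 n : binom n 0 = 1%nat.
Proof. now destruct n. Qed.

Lemma binom_gt n k : (n < k)%nat -> binom n k = 0%nat.
Proof.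
  revert k; induction n as [|n IH]; intros [|k] Hk; simpl; try lia; auto.
  rewrite !IH; lia.
Qed.

Lemma C_n_0 n : Binomial.C n 0 = 1.
Proof.
  unfold Binomial.C; rewrite Nat.sub_0_r; simpl.
  field; apply INR_fact_neq_0.
Qed.

Lemma C_n_n n : Binomial.C n n = 1.
Proof.
  unfold Binomial.C; rewrite Nat.sub_diag; simpl.
  field; apply INR_fact_neq_0.
Qed.

(* [Binomial.C n k] is junk for [k > n], whence the bound. *)
Lemma INR_binom n k : (k <= n)%nat -> INR (binom n k) = Binomial.C n k.
Proof.
  revert k; induction n as [|n IH]; intros [|k] Hk; try lia.
  - now rewrite C_n_0.
  - simpl binom; now rewrite C_n_0.
  - simpl binom; rewrite plus_INR.
    destruct (Nat.eq_dec k n) as [->|Hne].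
    + rewrite (binom_gt n (S n)), IH, !C_n_n by lia; simpl; lra.
    + rewrite !IH by lia; apply pascal; lia.
Qed.

Lemma sum_binom_0 (x : R) r : sum_f_R0 (fun i => INR (binom 0 i) * x ^ i) r = 1.
Proof.
  induction r as [|r IH]; [simpl; lra|].
  rewrite tech5, IH; simpl; lra.
Qed.

Lemma sum_binom_pascal (x : R) n r :
  sum_f_R0 (fun i => INR (binom (S n) i) * x ^ i) (S r)
  = sum_f_R0 (fun i => INR (binom n i) * x ^ i) (S r)
    + x * sum_f_R0 (fun i => INR (binom n i) * x ^ i) r.
Proof.
  induction r as [|r IH].
  - simpl; rewrite !plus_INR, !binom_n_0; simpl; ring.
  - rewrite (tech5 _ (S r)), IH, (tech5 _ (S r)), (tech5 _ r).
    change (binom (S n) (S (S r))) with (binom n (S r) + binom n (S (S r)))%nat.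
    rewrite plus_INR; simpl pow; ring.
Qed.

Lemma INR_ball_size q n r : (1 <= q)%nat ->
  INR (ball_size q n r) = sum_f_R0 (fun i => INR (binom n i) * (INR q - 1) ^ i) r.
Proof.
  intros Hq; revert r; induction n as [|n IH]; intros r.
  - now rewrite sum_binom_0.
  - destruct r as [|r]; simpl ball_size.
    + rewrite Nat.mul_0_r, Nat.add_0_r, IH; simpl; now rewrite !binom_n_0.
    + rewrite plus_INR, mult_INR, minus_INR, !IH, sum_binom_pascal by lia.
      simpl; ring.
Qed.

Lemma INR_ball_size_Vball q w d : (1 <= q)%nat -> (d <= w)%nat ->
  INR (ball_size q w d) = Vball w d q.
Proof.
  intros Hq Hd; rewrite INR_ball_size by exact Hq.
  apply sum_eq; intros i Hi; now rewrite INR_binom by lia.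
Qed.

Lemma logq_rate_ge (q w : nat) (M V : R) :
  (2 <= q)%nat -> (1 <= w)%nat -> 1 <= M -> INR q ^ w <= M * V ->
  1 - / INR w * logq q V <= logq q M / INR w.
Proof.
  intros Hq Hw HM Hcover.
  assert (Hq1 : 1 < INR q) by (apply lt_1_INR; lia).
  assert (Hw0 : 0 < INR w) by (apply lt_0_INR; lia).
  assert (Hqw : 0 < INR q ^ w) by (apply pow_lt; lra).
  assert (HV : 0 < V) by nra.
  assert (Hlnq : 0 < ln (INR q)) by (rewrite <- ln_1; apply ln_increasing; lra).
  assert (Hln : INR w * ln (INR q) <= ln M + ln V).
  { rewrite <- ln_pow, <- ln_mult by lra.
    destruct Hcover as [Hlt|Heq]; [left; now apply ln_increasing|now rewrite Heq]. }
  unfold logq.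
  assert (Hgap : ln M / ln (INR q) / INR w - (1 - / INR w * (ln V / ln (INR q)))
                 = (ln M + ln V - INR w * ln (INR q)) / (INR w * ln (INR q)))
    by (field; lra).
  assert (0 <= (ln M + ln V - INR w * ln (INR q)) / (INR w * ln (INR q))).
  { apply Rmult_le_pos; [lra|left; apply Rinv_0_lt_compat; nra]. }
  lra.
Qed.

Theorem theorem5 (w d q : nat) (hw : (1 <= w)%nat) (hd : (d <= w)%nat)
  (hq : (2 <= q)%nat) (c : R)
  (hc : c < 1 - / INR w * logq q (Vball w d q)) :
  exists (n : nat) (F : list (list nat)),
    (1 <= n)%nat /\ (1 <= length F)%nat /\ is_code q n F /\ zero_error w d n F /\
    c < logq q (INR (length F)) / INR n.
Proof.
  set (close := fun x y => hamming x y <=? d).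
  assert (Hrefl : forall x, close x x = true)
    by (intros x; unfold close; now rewrite hamming_refl).
  assert (Hsym : forall x y, close x y = close y x)
    by (intros x y; unfold close; now rewrite hamming_sym).
  destruct (greedy_far_subset _ close Hrefl Hsym (ball_size q w d) (words q w))
    as [C [Hnodup [Hincl [Hfar Hcover]]]].
  { intros x Hx; unfold close.
    now rewrite length_hamming_ball by (apply is_word_of_In_words, Hx). }
  rewrite length_words in Hcover.
  assert (Hwords : Forall (is_word q w) C).
  { apply Forall_forall; intros x Hx; apply is_word_of_In_words, Hincl, Hx. }
  assert (Hsize : (1 <= length C)%nat).
  { pose proof (Nat.pow_nonzero q w ltac:(lia)); destruct C; simpl in *; lia. }
  exists w, C; repeat split; auto.
  - apply zero_error_of_hamming_gt.
    + eapply Forall_impl; [|exact Hwords]; now intros x [].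
    + intros x y Hx Hy Hxy; apply Nat.leb_gt, (Hfar x y Hx Hy Hxy).
  - eapply Rlt_le_trans; [exact hc|].
    apply logq_rate_ge; auto.
    + apply (le_INR 1), Hsize.
    + rewrite <- INR_ball_size_Vball, <- pow_INR, <- mult_INR by lia.
      apply le_INR, Hcover.
Qed.
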